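(* Let $m,n$ be positive integers. There is an explicit bijection between the set of $(m,n)$-partial fully-packed loop configurations and the set of $(m,n)$-partial height-function matrices.
   Context: An $(m,n)$-partial height-function matrix is an integer matrix $(h_{i,j})_{0\le i\le m,\,0\le j\le n}$ with all entries nonnegative, $h_{0,k}=k$ for $0\le k\le n$, $h_{\ell,0}=\ell$ for $0\le \ell\le m$, and such that any two horizontally or vertically adjacent entries differ by exactly $1$. The graph $G_{m,n}$ has vertex set $\{v_{i,j}:0\le i\le m+1,\ 0\le j\le n+1\}\setminus\{v_{0,0},v_{0,n+1},v_{m+1,0},v_{m+1,n+1}\}$ and edges $v_{i,j}v_{i+1,j}$ for $0\le i\le m$, $1\le j\le n$, and $v_{i,j}v_{i,j+1}$ for $1\le i\le m$, $0\le j\le n$. Vertices $v_{i,j}$ with $1\le i\le m$, $1\le j\le n$ are interior; the others are boundary vertices. An $(m,n)$-partial fully-packed loop configuration is a subgraph of $G_{m,n}$ (on all vertices) such that every interior vertex has exactly two incident edges, and: for $1\le j\le n$ the edge $v_{0,j}v_{1,j}$ is present if and only if $j$ is odd, and for $1\le i\le m$ the edge $v_{i,0}v_{i,1}$ is present if and only if $i$ is even (edges to bottom and right boundary vertices are unrestricted). *)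

From mathcomp Require Import all_boot all_order all_algebra.
Set Implicit Arguments. Unset Strict Implicit. Unset Printing Implicit Defensive.

(* Vertices of G_{m,n}: pairs (i,j), 0<=i<=m+1, 0<=j<=n+1.  The four corners
   are included in the type but are isolated (no edge of G_{m,n} touches them)
   and are not interior, so they impose no constraint. *)
Definition vert (m n : nat) := ('I_m.+2 * 'I_n.+2)%type.

(* An edge is encoded as an ordered pair (u,v) with u the endpoint with
   smaller index. *)
Definition edge (m n : nat) := (vert m n * vert m n)%type.

Definition gedge (m n : nat) (e : edge m n) : bool :=
  let: ((i, j), (k, l)) := e in
  [|| [&& (k : nat) == i.+1, (l : nat) == j, i <= m & 1 <= j <= n]
    | [&& (k : nat) == i, (l : nat) == j.+1, 1 <= i <= m & j <= n]].

Definition interior (m n : nat) (v : vert m n) : bool :=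
  (1 <= v.1 <= m) && (1 <= v.2 <= n).

Definition vtx (m n : nat) (i j : nat) : vert m n := (inord i, inord j).

Definition is_pfpl (m n : nat) (E : {set edge m n}) : Prop :=
  [/\ E \subset [set e | gedge e],
      forall v : vert m n, interior v ->
        #|[set e in E | (e.1 == v) || (e.2 == v)]| = 2,
      forall j : nat, 1 <= j <= n ->
        ((vtx m n 0 j, vtx m n 1 j) \in E) = odd j
    & forall i : nat, 1 <= i <= m ->
        ((vtx m n i 0, vtx m n i 1) \in E) = ~~ odd i].

Definition is_phm (m n : nat) (h : 'M[nat]_(m.+1, n.+1)) : Prop :=
  [/\ forall k : 'I_n.+1, h ord0 k = k,
      forall l : 'I_m.+1, h l ord0 = l,
      forall (i : 'I_m.+1) (j : 'I_n.+1), i < m ->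
        (h i j = (h (inord i.+1) j).+1) \/ (h (inord i.+1) j = (h i j).+1)
    & forall (i : 'I_m.+1) (j : 'I_n.+1), j < n ->
        (h i j = (h i (inord j.+1)).+1) \/ (h i (inord j.+1) = (h i j).+1)].

Definition PFPL (m n : nat) := {E : {set edge m n} | is_pfpl E}.
Definition PHM (m n : nat) := {h : 'M[nat]_(m.+1, n.+1) | is_phm h}.

From mathcomp Require Import all_boot all_order all_algebra zify.
From Stdlib Require Import ProofIrrelevance.
Set Implicit Arguments. Unset Strict Implicit. Unset Printing Implicit Defensive.

(* A height matrix h yields the configuration with a vertical edge between
   horizontally adjacent entries x, y iff max(x, y) is odd, and a horizontal
   edge between vertically adjacent entries iff max(x, y) is even.  The four
   entries around an interior vertex form a unit square of a 1-Lipschitz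
   function, and a case check shows that exactly two of its four edges are
   present.  Conversely, x and the parity of max(x, y) determine y, so h is
   rebuilt row by row from its left column; the degree condition at each
   interior vertex is exactly what makes consecutive rows compatible, and the
   bound |i - j| <= h(i, j) keeps the entries nonnegative. *)

Definition adj1 (x y : nat) := x = y.+1 \/ y = x.+1.

Definition oddmax (x y : nat) := odd (maxn x y).

Definition next_height (x : nat) (e : bool) :=
  if e == ~~ odd x then x.+1 else x.-1.

Lemma oddmax_square a b c d : adj1 a b -> adj1 a c -> adj1 b d -> adj1 c d ->
  oddmax a b + oddmax c d + ~~ oddmax a c + ~~ oddmax b d = 2.
Proof. by rewrite /adj1 /oddmax; do 4!case=> ?; subst; lia. Qed.

Lemma next_heightK x y : adj1 x y -> next_height x (oddmax x y) = y.
Proof. by rewrite /adj1 /oddmax /next_height; case: eqP; lia. Qed.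

Lemma oddmax_next x e : adj1 x (next_height x e) -> oddmax x (next_height x e) = e.
Proof. by rewrite /adj1 /oddmax /next_height; case: eqP; lia. Qed.

Lemma square_completion a b c (down right : bool) :
  adj1 a b -> adj1 a c -> 0 < b + c ->
  oddmax a b + down + ~~ oddmax a c + right = 2 ->
  exists d, [/\ adj1 b d, adj1 c d, oddmax c d = down & ~~ oddmax b d = right].
Proof.
move=> ab ac bc sum; exists (next_height c down).
move: ab ac bc sum; rewrite /adj1 /oddmax /next_height.
by do 2!case=> ?; subst; case: eqP; split; lia.
Qed.

Section Grid.

Variables m n : nat.

Local Notation vtx := (vtx m n).

Definition vedge (i j : nat) : edge m n := (vtx i j, vtx i.+1 j).
Definition hedge (i j : nat) : edge m n := (vtx i j, vtx i j.+1).

Lemma vtx_val i j : i <= m.+1 -> j <= n.+1 ->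
  (vtx i j).1 = i :> nat /\ (vtx i j).2 = j :> nat.
Proof. by move=> hi hj; rewrite /= !inordK. Qed.

Lemma edge_vtx (e : edge m n) : exists a b c d,
  [/\ a <= m.+1, b <= n.+1, c <= m.+1, d <= n.+1 & e = (vtx a b, vtx c d)].
Proof.
case: e => [[a b] [c d]]; exists a, b, c, d.
by split; rewrite ?/vtx ?inord_val // -ltnS ltn_ord.
Qed.

Lemma gedge_vtx a b c d : a <= m.+1 -> b <= n.+1 -> c <= m.+1 -> d <= n.+1 ->
  gedge (vtx a b, vtx c d) =
  [|| [&& c == a.+1, d == b, a <= m & 1 <= b <= n]
    | [&& c == a, d == b.+1, 1 <= a <= m & b <= n]].
Proof. by move=> *; rewrite /gedge /vtx /= !inordK. Qed.

Lemma card_incident (E : {set edge m n}) i j :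
  E \subset [set e | gedge e] -> 1 <= i <= m -> 1 <= j <= n ->
  #|[set e in E | (e.1 == vtx i j) || (e.2 == vtx i j)]| =
  (vedge i.-1 j \in E) + (vedge i j \in E) + (hedge i j.-1 \in E) + (hedge i j \in E).
Proof.
move=> /subsetP sE hi hj.
set s := [:: vedge i.-1 j; vedge i j; hedge i j.-1; hedge i j].
have -> : [set e in E | (e.1 == vtx i j) || (e.2 == vtx i j)] =
          [set e in [seq x <- s | x \in E]].
  apply/setP => e; rewrite !inE mem_filter.
  case eE: (e \in E); rewrite ?andbF //=.
  have := sE _ eE; rewrite inE.
  have [a [b [c [d [ha hb hc hd ->]]]]] := edge_vtx e.
  rewrite gedge_vtx // => /orP[/and5P[/eqP -> /eqP -> *] | /and4P[/eqP -> /eqP -> *]];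
    by rewrite !inE /= !xpair_eqE -!val_eqE /= !inordK; lia.
have us : uniq s.
  by rewrite /= !inE !xpair_eqE -!val_eqE /= !inordK; lia.
rewrite cardsE; have /card_uniqP -> := filter_uniq (mem E) us.
by rewrite size_filter /= !addnA addn0.
Qed.

Lemma pfpl_degree (E : {set edge m n}) i j : is_pfpl E -> i < m -> j < n ->
  (vedge i j.+1 \in E) + (vedge i.+1 j.+1 \in E)
  + (hedge i.+1 j \in E) + (hedge i.+1 j.+1 \in E) = 2.
Proof.
case=> sE deg _ _ hi hj.
have [v1 v2] := @vtx_val i.+1 j.+1 (ltnW hi) (ltnW hj).
have := deg (vtx i.+1 j.+1); rewrite card_incident //; try lia.
by apply; rewrite /interior v1 v2; lia.
Qed.

Definition height (h : 'M[nat]_(m.+1, n.+1)) (i j : nat) := h (inord i) (inord j).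

(* The vertical edge v_{i,j} v_{i+1,j} separates the entries h(i,j-1) and
   h(i,j); the horizontal edge v_{i,j} v_{i,j+1} separates h(i-1,j) and h(i,j). *)
Definition fpl_of_height (h : 'M[nat]_(m.+1, n.+1)) : {set edge m n} :=
  [set e | gedge e && (let: ((i, j), (k, _)) := e in
     if k == i.+1 :> nat then oddmax (height h i j.-1) (height h i j)
     else ~~ oddmax (height h i.-1 j) (height h i j))].

Lemma mem_vedge_fpl h i j : i <= m -> 0 < j <= n ->
  (vedge i j \in fpl_of_height h) = oddmax (height h i j.-1) (height h i j).
Proof.
by move=> hi hj; rewrite inE gedge_vtx /= ?inordK ?eqxx ?hi ?hj; lia.
Qed.

Lemma mem_hedge_fpl h i j : 0 < i <= m -> j <= n ->
  (hedge i j \in fpl_of_height h) = ~~ oddmax (height h i.-1 j) (height h i j).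
Proof.
move=> hi hj; rewrite inE gedge_vtx /= ?inordK ?eqxx ?hi ?hj; try lia.
by rewrite (_ : (i == i.+1) = false) ?orbT //; lia.
Qed.

Section HeightToFpl.

Variable h : 'M[nat]_(m.+1, n.+1).
Hypothesis hP : is_phm h.

Lemma height_top j : j <= n -> height h 0 j = j.
Proof.
case: hP => top _ _ _ hj; rewrite /height.
by have -> : inord 0 = ord0 :> 'I_m.+1 := inord_val ord0; rewrite top inordK.
Qed.

Lemma height_left i : i <= m -> height h i 0 = i.
Proof.
case: hP => _ left _ _ hi; rewrite /height.
by have -> : inord 0 = ord0 :> 'I_n.+1 := inord_val ord0; rewrite left inordK.
Qed.

Lemma adj1_height_down i j : i < m -> j <= n -> adj1 (height h i j) (height h i.+1 j).
Proof.
case: hP => _ _ down _ hi hj; have := down (inord i) (inord j).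
by rewrite /height inordK; [apply | exact: ltnW].
Qed.

Lemma adj1_height_right i j : i <= m -> j < n -> adj1 (height h i j) (height h i j.+1).
Proof.
case: hP => _ _ _ right hi hj; have := right (inord i) (inord j).
by rewrite /height (@inordK n); [apply | exact: ltnW].
Qed.

Lemma fpl_of_height_pfpl : is_pfpl (fpl_of_height h).
Proof.
have sub : fpl_of_height h \subset [set e | gedge e].
  by apply/subsetP => e; rewrite !inE => /andP[].
split=> //.
- move=> [[i hi] [j hj]] /andP[/= /andP[i_gt0 i_le] /andP[j_gt0 j_le]].
  have -> : (Ordinal hi, Ordinal hj) = vtx i j.
    by congr pair; apply/val_inj; rewrite /= inordK.
  case: i i_gt0 i_le {hi} => // i _ i_le; case: j j_gt0 j_le {hj} => // j _ j_le.
  rewrite card_incident //= mem_vedge_fpl ?mem_hedge_fpl ?mem_vedge_fpl //=; try lia.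
  by apply: oddmax_square; [apply: adj1_height_right | apply: adj1_height_down
    | apply: adj1_height_down | apply: adj1_height_right]; lia.
- by move=> j hj; rewrite mem_vedge_fpl // !height_top /oddmax //; lia.
- by move=> i hi; rewrite mem_hedge_fpl // !height_left /oddmax //; lia.
Qed.

End HeightToFpl.

Lemma fpl_of_height_inj h1 h2 : is_phm h1 -> is_phm h2 ->
  fpl_of_height h1 = fpl_of_height h2 -> h1 = h2.
Proof.
move=> p1 p2 eqF.
have eq_height i j : i <= m -> j <= n -> height h1 i j = height h2 i j.
  move=> hi; elim: j => [|j IH] hj; first by rewrite !height_left.
  have hj' : 0 < j.+1 <= n by lia.
  rewrite -(next_heightK (adj1_height_right p1 hi hj)).
  rewrite -(next_heightK (adj1_height_right p2 hi hj)).
  by rewrite -(mem_vedge_fpl h1 hi hj') -(mem_vedge_fpl h2 hi hj') eqF IH // ltnW.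
apply/matrixP => i j; have := eq_height i j; rewrite /height !inord_val.
by apply; rewrite -ltnS ltn_ord.
Qed.

Section FplToHeight.

Variable E : {set edge m n}.
Hypothesis EP : is_pfpl E.

Fixpoint hrow (i j : nat) : nat :=
  if j is j'.+1 then next_height (hrow i j') (vedge i j \in E) else i.

Definition height_of_fpl : 'M[nat]_(m.+1, n.+1) := \matrix_(i, j) hrow i j.

Lemma height_of_fplE i j : i <= m -> j <= n -> height height_of_fpl i j = hrow i j.
Proof. by move=> hi hj; rewrite /height mxE !inordK. Qed.

Lemma hrow_top j : j <= n -> hrow 0 j = j.
Proof.
case: EP => _ _ top _; elim: j => [|j IH] hj //.
by rewrite /= IH ?(ltnW hj) // /vedge top // /next_height oddS eqxx.
Qed.

(* The bound |i - j| <= hrow i j supplies the hypothesis 0 < b + c of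
   [square_completion]: for the entries 1, 0, 0 the degree condition alone
   also allows the completion -1, which truncated subtraction would hide. *)
Definition hrow_inv (i j : nat) :=
  [/\ 0 < j -> adj1 (hrow i j.-1) (hrow i j), j <= hrow i j + i & i <= hrow i j + j].

Lemma hrow_step k : k < m -> (forall j, j <= n -> hrow_inv k j) ->
  forall j, j <= n -> [/\ hrow_inv k.+1 j, adj1 (hrow k j) (hrow k.+1 j)
    & (hedge k.+1 j \in E) = ~~ oddmax (hrow k j) (hrow k.+1 j)].
Proof.
move=> hk inv_k; elim=> [|j IH] hj.
  case: EP => _ _ _ left.
  by split; [split=> //=; lia | right | rewrite /hedge left /oddmax /=; lia].
have [[_ _ c_lo] ac hc] := IH (ltnW hj).
have [ab b_lo _] := inv_k j.+1 hj.
have {}ab := ab isT.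
have vb : (vedge k j.+1 \in E) = oddmax (hrow k j) (hrow k j.+1).
  by rewrite (oddmax_next ab).
have sum := pfpl_degree EP hk hj; rewrite vb hc in sum.
have [|d [bd cd cdd bdd]] := square_completion ab ac _ sum; first lia.
rewrite /hrow_inv; have -> : hrow k.+1 j.+1 = d by rewrite /= -cdd next_heightK.
by split=> //; split=> [_||]; [exact: cd | move: bd cd; rewrite /adj1; lia..].
Qed.

Lemma hrow_invariant i : i <= m -> forall j, j <= n -> hrow_inv i j.
Proof.
elim: i => [|i IH] hi j hj.
  by split=> [j_gt0||]; rewrite !hrow_top //; try lia; right; lia.
by have [] := hrow_step hi (IH (ltnW hi)) hj.
Qed.

Lemma height_of_fpl_phm : is_phm height_of_fpl.
Proof.
split.
- by move=> k; rewrite mxE hrow_top // -ltnS ltn_ord.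
- by move=> l; rewrite mxE.
- move=> i j hi; rewrite !mxE inordK //.
  by have [] := hrow_step hi (hrow_invariant (ltnW hi)) (ltn_ord j).
- move=> i j hj; rewrite !mxE inordK //.
  by have [/(_ isT)] := hrow_invariant (ltn_ord i) hj.
Qed.

Lemma height_of_fplK : fpl_of_height height_of_fpl = E.
Proof.
have [sE _ _ _] := EP.
apply/setP => e; have [a [b [c [d [ha hb hc hd ->]]]]] := edge_vtx e.
case ge: (gedge (vtx a b, vtx c d)); last first.
  rewrite inE ge; apply/esym/negbTE; apply: contraFN ge => /(subsetP sE).
  by rewrite inE.
move: ge; rewrite gedge_vtx //.
case/orP=> [/and5P[/eqP -> /eqP -> a_le b_gt0 b_le]
          | /and4P[/eqP -> /eqP -> /andP[a_gt0 a_le] b_le]].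
- rewrite -[(vtx a b, _)]/(vedge a b) mem_vedge_fpl ?b_gt0 // !height_of_fplE; try lia.
  case: b b_gt0 b_le {hb hd} => // b _ b_le.
  by have [/(_ isT) /oddmax_next] := hrow_invariant a_le b_le.
- rewrite -[(vtx a b, _)]/(hedge a b) mem_hedge_fpl ?a_gt0 // !height_of_fplE; try lia.
  case: a a_gt0 a_le {ha hc} => // a _ a_le.
  by have [_ _ ->] := hrow_step a_le (hrow_invariant (ltnW a_le)) b_le.
Qed.

End FplToHeight.

Lemma fpl_of_heightK h : is_phm h -> height_of_fpl (fpl_of_height h) = h.
Proof.
move=> hP; have EP := fpl_of_height_pfpl hP.
by apply: fpl_of_height_inj => //; [exact: height_of_fpl_phm | exact: height_of_fplK].
Qed.

End Grid.

Theorem lemma3p12 (m n : nat) (hm : 0 < m) (hn : 0 < n) :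
  exists f : PFPL m n -> PHM m n, bijective f.
Proof.
(* The bijection also exists for m = 0 or n = 0. *)
pose f (E : PFPL m n) : PHM m n := exist _ _ (height_of_fpl_phm (proj2_sig E)).
pose g (h : PHM m n) : PFPL m n := exist _ _ (fpl_of_height_pfpl (proj2_sig h)).
exists f, g => [[E EP] | [h hP]]; apply: subset_eq_compat.
- exact: height_of_fplK.
- exact: fpl_of_heightK.
Qed.
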